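(* Let $d\ge3$ be an integer. The function $$q_d(\gamma)=\frac{1-\frac{F^*(d^2-1,\gamma)}{(d-1)^2}}{1-\gamma}$$ on the interval $-\frac1{d-1}\le\gamma<1$ attains its minimum at $\gamma=-\frac1{d-1}$.
   Context: For an integer $k\ge1$ and $\gamma\in[-1,1]$, $$F^*(k,\gamma)=\frac{2\gamma}{k}\left(\frac{\Gamma((k+1)/2)}{\Gamma(k/2)}\right)^2 {}_2F_1\!\left(\tfrac12,\tfrac12;\tfrac k2+1;\gamma^2\right),$$ where ${}_2F_1$ is the Gaussian hypergeometric function. *)

From Stdlib Require Import Reals Factorial.
From Coquelicot Require Import Coquelicot.
Open Scope R_scope.

Definition Gamma (x : R) : R :=
  RInt_gen (fun t => Rpower t (x - 1) * exp (- t)) (at_right 0) (Rbar_locally p_infty).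

Fixpoint poch (a : R) (n : nat) : R :=
  match n with
  | O => 1
  | S m => poch a m * (a + INR m)
  end.

Definition hyp2F1 (a b c z : R) : R :=
  Series (fun n => poch a n * poch b n / (poch c n * INR (fact n)) * z ^ n).

Definition Fstar (k : nat) (g : R) : R :=
  2 * g / INR k * (Gamma ((INR k + 1) / 2) / Gamma (INR k / 2)) ^ 2
  * hyp2F1 (1/2) (1/2) (INR k / 2 + 1) (g ^ 2).

Definition q (d : nat) (g : R) : R :=
  (1 - Fstar (d * d - 1)%nat g / (INR d - 1) ^ 2) / (1 - g).

(* Write k = d^2 - 1 and t = 1/(d-1), so 0 < t <= 1/2.  Then
     F*(k, g) = C_k * g * H(g^2),   C_k = (2/k) (Gamma((k+1)/2) / Gamma(k/2))^2,
   with H = 2F1(1/2, 1/2; k/2 + 1; .), and q_d(g) = (1 - C_k t^2 g H(g^2)) / (1 - g).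
   The proof rests on three independent estimates.

   1. Gamma: from the improper integral Gamma(s) = int_0^oo t^(s-1) e^(-t) dt
      (s >= 1) we derive Gamma(s+1) = s Gamma(s) and, integrating the nonnegative
      function t^(s-1) e^(-t) (L - sqrt t)^2, the bound (Gamma(s+1/2)/Gamma(s))^2 <= s.
      Hence 0 <= C_k <= 1.
   2. Hypergeometric series: for c >= 2 the coefficients of 2F1(1/2, 1/2; c; .)
      satisfy 0 <= a_n <= 2/((n+1)(n+2)), so 0 <= H(z) <= 2 on [0, 1), and
      x H(x^2) is 20/9-Lipschitz (from above) on [-1/2, 1/2].
   3. An elementary inequality: for an odd f with these two properties and
      0 <= C <= t^2, the ratio (1 - C f(g))/(1 - g) on [-t, 1) is smallest at -t.
   The theorem combines the three. *)

From Stdlib Require Import Reals Lra Psatz Classical Factorial.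
From Coquelicot Require Import Coquelicot.
Open Scope R_scope.

Local Notation at_0 := (at_right 0).
Local Notation at_oo := (Rbar_locally p_infty).

Lemma R_ball (x e y : R) : ball x e y <-> x - e < y < x + e.
Proof.
  change (ball x e y) with (Rabs (y - x) < e).
  split; [intros H; apply Rabs_def2 in H | intros H; apply Rabs_def1]; lra.
Qed.

Lemma exp_le_exp x y : x <= y -> exp x <= exp y.
Proof. intros [Hlt | ->]; [left; apply exp_increasing, Hlt | right; reflexivity]. Qed.

Definition gamma_integrand (s t : R) : R := Rpower t (s - 1) * exp (- t).

Lemma gamma_integrand_pos s t : 0 < gamma_integrand s t.
Proof. apply Rmult_lt_0_compat; apply exp_pos. Qed.

Lemma gamma_integrand_derive s t : 0 < t ->
  is_derive (gamma_integrand (s + 1)) t (s * gamma_integrand s t - gamma_integrand (s + 1) t).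
Proof.
  intros Ht. unfold gamma_integrand. replace (s + 1 - 1) with s by ring.
  assert (Hpow : is_derive (fun x => Rpower x s) t (s * Rpower t (s - 1))).
  { apply is_derive_Reals, derivable_pt_lim_power, Ht. }
  assert (Hexp : is_derive (fun x => exp (- x)) t (- exp (- t))).
  { auto_derive; [exact I | ring]. }
  replace (s * (Rpower t (s - 1) * exp (- t)) - Rpower t s * exp (- t))
    with (s * Rpower t (s - 1) * exp (- t) + Rpower t s * - exp (- t)) by ring.
  exact (is_derive_mult _ _ _ _ _ Hpow Hexp (fun a b => Rmult_comm a b)).
Qed.

Lemma gamma_integrand_continuous s t : 0 < t -> continuous (gamma_integrand s) t.
Proof.
  intros Ht. replace s with (s - 1 + 1) by ring.
  apply (@ex_derive_continuous R_AbsRing R_NormedModule).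
  eexists. apply gamma_integrand_derive, Ht.
Qed.

Lemma ln_le_2sqrt t : 0 < t -> ln t <= 2 * sqrt t.
Proof.
  intros Ht. pose proof (sqrt_lt_R0 t Ht) as Hs.
  assert (E : ln t = 2 * ln (sqrt t)).
  { rewrite <- (sqrt_sqrt t) at 1 by lra. rewrite ln_mult by lra. ring. }
  pose proof (exp_ineq1_le (ln (sqrt t))) as Hexp. rewrite exp_ln in Hexp by lra. lra.
Qed.

(* An integrable majorant: t^(s-1) e^(-t) <= e^(2(s-1)^2) e^(-t/2) for s >= 1,
   using (s-1) ln t <= 2(s-1) sqrt t <= 2(s-1)^2 + t/2. *)
Lemma gamma_integrand_dominated s t : 1 <= s -> 0 < t ->
  gamma_integrand s t <= exp (2 * (s - 1) ^ 2) * exp (- t / 2).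
Proof.
  intros Hs Ht. unfold gamma_integrand, Rpower. rewrite <- !exp_plus.
  apply exp_le_exp.
  pose proof (ln_le_2sqrt t Ht). pose proof (sqrt_sqrt t (Rlt_le _ _ Ht)).
  pose proof (pow2_ge_0 (sqrt t - 2 * (s - 1))). nra.
Qed.

Lemma ex_RInt_positive (f : R -> R) a b :
  (forall t, 0 < t -> continuous f t) -> 0 < a -> 0 < b -> ex_RInt f a b.
Proof.
  intros Hc Ha Hb. apply (@ex_RInt_continuous R_CompleteNormedModule).
  intros z [Hz _]. apply Hc. unfold Rmin in Hz. destruct (Rle_dec a b); lra.
Qed.

Lemma RInt_mono_interval (f : R -> R) a a0 b0 b :
  (forall t, 0 < t -> continuous f t) -> (forall t, 0 < t -> 0 <= f t) ->
  0 < a -> a <= a0 -> a0 <= b0 -> b0 <= b -> RInt f a0 b0 <= RInt f a b.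
Proof.
  intros Hc Hp Ha Haa Hab Hbb.
  rewrite <- (RInt_Chasles f a a0 b), <- (RInt_Chasles f a0 b0 b)
    by (apply ex_RInt_positive; auto; lra).
  assert (0 <= RInt f a a0).
  { apply RInt_ge_0; [lra | apply ex_RInt_positive; auto; lra | intros; apply Hp; lra]. }
  assert (0 <= RInt f b0 b).
  { apply RInt_ge_0; [lra | apply ex_RInt_positive; auto; lra | intros; apply Hp; lra]. }
  unfold plus; simpl. lra.
Qed.

(* Monotone convergence for improper integrals on (0, +oo): a nonnegative
   continuous function whose integrals over compact subintervals are bounded is
   integrable, its integral being the supremum of those integrals. *)
Lemma ex_RInt_gen_nonneg_bounded (f : R -> R) (B : R) :
  (forall t, 0 < t -> continuous f t) -> (forall t, 0 < t -> 0 <= f t) ->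
  (forall a b, 0 < a -> a <= b -> RInt f a b <= B) ->
  ex_RInt_gen f at_0 at_oo.
Proof.
  intros Hc Hp HB.
  set (E := fun y => exists a b, 0 < a /\ a <= b /\ y = RInt f a b).
  destruct (completeness E) as [l [Hub Hlub]].
  { exists B. intros y (a & b & Ha & Hab & ->). apply HB; auto. }
  { exists (RInt f 1 1), 1, 1. repeat split; lra. }
  exists l. intros P [eps HP].
  assert (Hex : exists a0 b0, 0 < a0 /\ a0 <= b0 /\ l - eps < RInt f a0 b0).
  { apply NNPP. intros Hn.
    assert (l <= l - eps); [| destruct eps; simpl in *; lra].
    apply Hlub. intros y (a & b & Ha & Hab & ->).
    apply Rnot_lt_le. intros Hl. apply Hn. exists a, b. auto. }
  destruct Hex as (a0 & b0 & Ha0 & Hab0 & Hl).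
  apply (Filter_prod _ _ _ (fun a => 0 < a < a0) (fun b => b0 < b)).
  - exists (mkposreal a0 Ha0). intros y Hy Hy0. apply R_ball in Hy. simpl in Hy. split; lra.
  - exists b0. auto.
  - intros a b [Ha Ha'] Hb. exists (RInt f a b). split.
    + apply (@RInt_correct R_CompleteNormedModule), ex_RInt_positive; auto; lra.
    + apply HP, R_ball. split.
      * pose proof (RInt_mono_interval f a a0 b0 b Hc Hp ltac:(lra) ltac:(lra) Hab0 ltac:(lra)).
        destruct eps; simpl in *; lra.
      * assert (RInt f a b <= l) by (apply Hub; exists a, b; repeat split; lra).
        destruct eps; simpl in *; lra.
Qed.

(* Uniform bound on the truncated Euler integrals, via the majorant. *)
Lemma RInt_gamma_integrand_bounded s a b : 1 <= s -> 0 < a -> a <= b ->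
  RInt (gamma_integrand s) a b <= 2 * exp (2 * (s - 1) ^ 2).
Proof.
  intros Hs Ha Hab. set (M := exp (2 * (s - 1) ^ 2)).
  assert (HI : is_RInt (fun t => M * exp (- t / 2)) a b
     (minus (- 2 * M * exp (- b / 2)) (- 2 * M * exp (- a / 2)))).
  { apply (@is_RInt_derive R_CompleteNormedModule (fun t => - 2 * M * exp (- t / 2))).
    - intros x _. auto_derive; [exact I | unfold Rdiv; field].
    - intros x _. apply (@ex_derive_continuous R_AbsRing R_NormedModule).
      auto_derive. exact I. }
  apply Rle_trans with (RInt (fun t => M * exp (- t / 2)) a b).
  - apply RInt_le; [exact Hab | | eexists; exact HI |].
    + apply ex_RInt_positive; [intros; apply gamma_integrand_continuous | |]; lra.
    + intros x Hx. apply gamma_integrand_dominated; lra.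
  - rewrite (is_RInt_unique _ _ _ _ HI). unfold minus, plus, opp; simpl.
    pose proof (exp_pos (- b / 2)).
    assert (exp (- a / 2) <= 1) by (rewrite <- exp_0; apply exp_le_exp; lra).
    assert (0 < M) by apply exp_pos. nra.
Qed.

Lemma Gamma_correct s : 1 <= s ->
  is_RInt_gen (gamma_integrand s) at_0 at_oo (Gamma s).
Proof.
  intros Hs. apply (@RInt_gen_correct R_CompleteNormedModule).
  - apply Proper_StrongProper, at_right_proper_filter.
  - apply Proper_StrongProper, Rbar_locally_filter.
  - apply ex_RInt_gen_nonneg_bounded with (2 * exp (2 * (s - 1) ^ 2)).
    + intros; apply gamma_integrand_continuous; assumption.
    + intros; left; apply gamma_integrand_pos.
    + intros; apply RInt_gamma_integrand_bounded; assumption.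
Qed.

Lemma improper_integral_unique (f : R -> R) l1 l2 :
  is_RInt_gen f at_0 at_oo l1 -> is_RInt_gen f at_0 at_oo l2 -> l1 = l2.
Proof.
  intros H1 H2.
  apply (@is_RInt_gen_unique R_CompleteNormedModule) in H1, H2;
    try apply Proper_StrongProper;
    try apply at_right_proper_filter; try apply Rbar_locally_filter.
  congruence.
Qed.

Lemma eventually_positive_interval :
  filter_prod at_0 at_oo (fun ab => 0 < fst ab /\ fst ab < snd ab).
Proof.
  apply (Filter_prod _ _ _ (fun a => 0 < a < 1) (fun b => 1 < b)).
  - exists (mkposreal 1 Rlt_0_1). intros y Hy Hy0. apply R_ball in Hy. simpl in Hy. split; lra.
  - exists 1. auto.
  - intros a b Ha Hb. simpl. split; lra.
Qed.

Lemma improper_integral_nonneg (f : R -> R) l :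
  (forall t, 0 < t -> 0 <= f t) -> is_RInt_gen f at_0 at_oo l -> 0 <= l.
Proof.
  intros Hp Hl.
  assert (Hle : filter_prod at_0 at_oo (fun ab : R * R => fst ab <= snd ab)).
  { eapply filter_imp; [| exact eventually_positive_interval]. intros ab H; lra. }
  assert (Hdom : filter_prod at_0 at_oo (fun ab : R * R =>
            forall x, fst ab <= x <= snd ab -> norm (scal 0 (f x)) <= f x)).
  { eapply filter_imp; [| exact eventually_positive_interval].
    intros [a b] [Ha Hab] x Hx. simpl in *.
    unfold norm, scal; simpl; unfold abs, mult; simpl.
    rewrite Rmult_0_l, Rabs_R0. apply Hp. lra. }
  pose proof (@RInt_gen_norm R_CompleteNormedModule _ _ (at_right_proper_filter 0)
      (Rbar_locally_filter p_infty) (fun t => scal 0 (f t)) f (scal 0 l) l Hle Hdom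
      (is_RInt_gen_scal _ 0 l Hl) Hl) as Hnorm.
  unfold norm, scal in Hnorm; simpl in Hnorm; unfold abs, mult in Hnorm; simpl in Hnorm.
  rewrite Rmult_0_l, Rabs_R0 in Hnorm. exact Hnorm.
Qed.

(* Boundary terms of the integration by parts vanish: t^s e^(-t) -> 0 at 0+ ... *)
Lemma gamma_integrand_lim_0 s : 1 <= s ->
  filterlim (gamma_integrand (s + 1)) at_0 (locally 0).
Proof.
  intros Hs. apply filterlim_locally. intros eps.
  assert (Hd : 0 < Rmin eps 1) by (apply Rmin_pos; [apply cond_pos | lra]).
  exists (mkposreal _ Hd). intros t Ht Ht0. apply R_ball in Ht. simpl in Ht.
  pose proof (Rmin_l eps 1). pose proof (Rmin_r eps 1).
  assert (Hsmall : gamma_integrand (s + 1) t <= t).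
  { unfold gamma_integrand, Rpower. replace (s + 1 - 1) with s by ring.
    assert (ln t < 0) by (rewrite <- ln_1; apply ln_increasing; lra).
    assert (exp (s * ln t) <= t) by (rewrite <- (exp_ln t) at 2 by lra; apply exp_le_exp; nra).
    assert (exp (- t) <= 1) by (rewrite <- exp_0; apply exp_le_exp; lra).
    pose proof (exp_pos (s * ln t)). nra. }
  pose proof (gamma_integrand_pos (s + 1) t).
  apply R_ball. split; lra.
Qed.

(* ... and at +oo, by the exponential majorant. *)
Lemma gamma_integrand_lim_oo s : 1 <= s ->
  filterlim (gamma_integrand s) at_oo (locally 0).
Proof.
  intros Hs. apply filterlim_locally. intros eps.
  set (M := exp (2 * (s - 1) ^ 2)). assert (HM : 0 < M) by apply exp_pos.
  exists (Rmax 0 (- 2 * ln (eps / M))). intros t Ht.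
  pose proof (Rmax_l 0 (- 2 * ln (eps / M))). pose proof (Rmax_r 0 (- 2 * ln (eps / M))).
  assert (He : exp (- t / 2) < eps / M).
  { rewrite <- (exp_ln (eps / M)) by (apply Rdiv_lt_0_compat; [apply cond_pos | exact HM]).
    apply exp_increasing. lra. }
  assert (M * exp (- t / 2) < eps).
  { apply Rmult_lt_compat_l with (r := M) in He; [| exact HM].
    replace (M * (eps / M)) with (pos eps) in He by (field; lra). exact He. }
  pose proof (gamma_integrand_dominated s t Hs ltac:(lra)) as Hdom. fold M in Hdom.
  pose proof (gamma_integrand_pos s t). pose proof (cond_pos eps).
  apply R_ball. split; lra.
Qed.

(* The functional equation, by integrating the derivative of t^s e^(-t). *)
Lemma Gamma_succ s : 1 <= s -> Gamma (s + 1) = s * Gamma s.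
Proof.
  intros Hs.
  set (D := fun t => s * gamma_integrand s t - gamma_integrand (s + 1) t).
  assert (HD : forall x, 0 < x -> Derive (gamma_integrand (s + 1)) x = D x).
  { intros x Hx. apply is_derive_unique, gamma_integrand_derive, Hx. }
  assert (Hcont : forall x, 0 < x -> continuous (Derive (gamma_integrand (s + 1))) x).
  { intros x Hx. apply continuous_ext_loc with D.
    - exists (mkposreal x Hx). intros y Hy. apply R_ball in Hy. simpl in Hy.
      symmetry. apply HD. lra.
    - apply (@continuous_minus R_UniformSpace R_AbsRing R_NormedModule).
      + apply (@continuous_scal_r R_UniformSpace R_AbsRing R_NormedModule s).
        apply gamma_integrand_continuous, Hx.
      + apply gamma_integrand_continuous, Hx. }
  assert (Hzero : is_RInt_gen D at_0 at_oo (0 - 0)).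
  { apply (is_RInt_gen_ext (Derive (gamma_integrand (s + 1)))).
    - eapply filter_imp; [| exact eventually_positive_interval].
      intros [a b] [Ha Hab] x Hx. simpl in *. rewrite Rmin_left in Hx by lra.
      apply HD. lra.
    - apply is_RInt_gen_Derive.
      + eapply filter_imp; [| exact eventually_positive_interval].
        intros [a b] [Ha Hab] x Hx. simpl in *. rewrite Rmin_left in Hx by lra.
        eexists. apply gamma_integrand_derive. lra.
      + eapply filter_imp; [| exact eventually_positive_interval].
        intros [a b] [Ha Hab] x Hx. simpl in *. rewrite Rmin_left in Hx by lra.
        apply Hcont. lra.
      + apply gamma_integrand_lim_0, Hs.
      + apply gamma_integrand_lim_oo. lra. }
  assert (Hlin : is_RInt_gen D at_0 at_oo (s * Gamma s - Gamma (s + 1))).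
  { exact (is_RInt_gen_minus _ _ _ _ (is_RInt_gen_scal _ s _ (Gamma_correct s Hs))
             (Gamma_correct (s + 1) ltac:(lra))). }
  pose proof (improper_integral_unique D _ _ Hzero Hlin). lra.
Qed.

Lemma gamma_integrand_square s L t :
  L ^ 2 * gamma_integrand s t - 2 * L * gamma_integrand (s + / 2) t + gamma_integrand (s + 1) t
  = gamma_integrand s t * (L - Rpower t (/ 2)) ^ 2.
Proof.
  unfold gamma_integrand.
  replace (s + / 2 - 1) with (s - 1 + / 2) by field.
  replace (s + 1 - 1) with (s - 1 + / 2 + / 2) by field.
  rewrite !Rpower_plus. ring.
Qed.

(* Cauchy-Schwarz in disguise: the quadratic form L |-> L^2 G(s) - 2 L G(s+1/2) + G(s+1)
   is the integral of a square. *)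
Lemma Gamma_quadratic_nonneg s L : 1 <= s ->
  0 <= L ^ 2 * Gamma s - 2 * L * Gamma (s + / 2) + Gamma (s + 1).
Proof.
  intros Hs. assert (Hhalf : 1 <= s + / 2) by lra. assert (Hone : 1 <= s + 1) by lra.
  apply (improper_integral_nonneg (fun t =>
    L ^ 2 * gamma_integrand s t - 2 * L * gamma_integrand (s + / 2) t + gamma_integrand (s + 1) t)).
  - intros t _. rewrite gamma_integrand_square.
    apply Rmult_le_pos; [left; apply gamma_integrand_pos | apply pow2_ge_0].
  - eapply is_RInt_gen_ext; [apply filter_forall; intros; reflexivity |].
    exact (is_RInt_gen_plus _ _ _ _
      (is_RInt_gen_minus _ _ _ _ (is_RInt_gen_scal _ (L ^ 2) _ (Gamma_correct s Hs))
         (is_RInt_gen_scal _ (2 * L) _ (Gamma_correct (s + / 2) Hhalf)))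
      (Gamma_correct (s + 1) Hone)).
Qed.

(* Taking L = Gamma(s+1/2)/Gamma(s) and using Gamma(s+1) = s Gamma(s). *)
Lemma Gamma_half_ratio s : 1 <= s -> (Gamma (s + / 2) / Gamma s) ^ 2 <= s.
Proof.
  intros Hs.
  pose proof (Gamma_quadratic_nonneg s 0 Hs) as H0.
  rewrite Gamma_succ in H0 by exact Hs.
  destruct (Req_dec (Gamma s) 0) as [HA | HA].
  - rewrite HA. unfold Rdiv. rewrite Rinv_0. lra.
  - assert (HApos : 0 < Gamma s) by (destruct (Rtotal_order (Gamma s) 0) as [h | [h | h]]; nra).
    pose proof (Gamma_quadratic_nonneg s (Gamma (s + / 2) / Gamma s) Hs) as HL.
    rewrite Gamma_succ in HL by exact Hs.
    replace ((Gamma (s + / 2) / Gamma s) ^ 2 * Gamma s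
             - 2 * (Gamma (s + / 2) / Gamma s) * Gamma (s + / 2) + s * Gamma s)
      with (Gamma s * (s - (Gamma (s + / 2) / Gamma s) ^ 2)) in HL by (field; exact HA).
    nra.
Qed.

Lemma Series_le_of_partial (u : nat -> R) B :
  ex_series u -> (forall N, sum_n u N <= B) -> Series u <= B.
Proof.
  intros Hu HB.
  apply (is_lim_seq_le (sum_n u) (fun _ => B) (Series u) B HB);
    [exact (Series_correct u Hu) | apply is_lim_seq_const].
Qed.

Lemma Series_ge_of_partial (u : nat -> R) A :
  ex_series u -> (forall N, A <= sum_n u N) -> A <= Series u.
Proof.
  intros Hu HA.
  apply (is_lim_seq_le (fun _ => A) (sum_n u) A (Series u) HA);
    [apply is_lim_seq_const | exact (Series_correct u Hu)].
Qed.

Lemma sum_n_nonneg (u : nat -> R) N : (forall n, 0 <= u n) -> 0 <= sum_n u N.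
Proof.
  intros Hu. rewrite <- (Rmult_0_r (INR (S N))), <- sum_n_const.
  apply sum_n_m_le, Hu.
Qed.

Lemma sum_telescoping_bound N :
  sum_n (fun n => 2 / ((INR n + 1) * (INR n + 2))) N = 2 - 2 / (INR N + 2).
Proof.
  induction N as [| N IH].
  - rewrite sum_O. simpl. field.
  - rewrite sum_Sn, IH, S_INR. pose proof (pos_INR N). unfold plus; simpl. field. lra.
Qed.

Lemma sum_arith_geom N : sum_n (fun n => (2 * INR n + 1) * (1 / 4) ^ n) N
  = 20 / 9 - (24 * INR N + 44) / 9 * (1 / 4) ^ S N.
Proof.
  induction N as [| N IH].
  - rewrite sum_O. simpl. field.
  - rewrite sum_Sn, IH, S_INR. unfold plus; simpl. field.
Qed.

Lemma poch_pos x n : 0 < x -> 0 < poch x n.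
Proof. intros Hx. induction n as [| n IH]; simpl; [lra | pose proof (pos_INR n); nra]. Qed.

Lemma pow_diff_bound h x y m : Rabs x <= h -> Rabs y <= h -> y <= x ->
  Rabs (x ^ S m - y ^ S m) <= INR (S m) * h ^ m * (x - y).
Proof.
  intros Hx Hy Hxy. induction m as [| m IH].
  - simpl. rewrite Rabs_pos_eq; lra.
  - replace (x ^ S (S m) - y ^ S (S m)) with (x * (x ^ S m - y ^ S m) + y ^ S m * (x - y))
      by (simpl; ring).
    eapply Rle_trans; [apply Rabs_triang |]. rewrite !Rabs_mult, (Rabs_pos_eq (x - y)) by lra.
    assert (Hh : 0 <= h) by (pose proof (Rabs_pos x); lra).
    assert (Rabs (y ^ S m) <= h * h ^ m).
    { rewrite <- RPow_abs. apply (pow_incr _ _ (S m)). split; [apply Rabs_pos | exact Hy]. }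
    assert (Rabs x * Rabs (x ^ S m - y ^ S m) <= h * (INR (S m) * h ^ m * (x - y))).
    { apply Rmult_le_compat; [apply Rabs_pos | apply Rabs_pos | exact Hx | exact IH]. }
    assert (Rabs (y ^ S m) * (x - y) <= h * h ^ m * (x - y)) by (apply Rmult_le_compat_r; lra).
    rewrite (S_INR (S m)). simpl (h ^ S m). nra.
Qed.

Section HypergeometricCoefficients.

Variable c : R.
Hypothesis Hc : 2 <= c.

Definition hypcoef (n : nat) : R :=
  poch (1 / 2) n * poch (1 / 2) n / (poch c n * INR (fact n)).

Lemma hyp2F1_as_series z :
  hyp2F1 (1 / 2) (1 / 2) c z = Series (fun n => hypcoef n * z ^ n).
Proof. reflexivity. Qed.

Lemma hypcoef_succ n :
  hypcoef (S n) = hypcoef n * ((1 / 2 + INR n) ^ 2 / ((c + INR n) * (INR n + 1))).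
Proof.
  unfold hypcoef. simpl poch. rewrite fact_simpl, mult_INR, S_INR.
  pose proof (poch_pos c n ltac:(lra)). pose proof (pos_INR n).
  pose proof (INR_fact_lt_0 n). field. repeat split; lra.
Qed.

Lemma hypcoef_nonneg n : 0 <= hypcoef n.
Proof.
  unfold hypcoef. pose proof (poch_pos (1 / 2) n ltac:(lra)).
  pose proof (poch_pos c n ltac:(lra)). pose proof (INR_fact_lt_0 n).
  apply Rmult_le_pos; [nra | left; apply Rinv_0_lt_compat; nra].
Qed.

(* The summable majorant: since c >= 2, the ratio a_(n+1)/a_n is at most (n+1)/(n+3). *)
Lemma hypcoef_le n : hypcoef n <= 2 / ((INR n + 1) * (INR n + 2)).
Proof.
  induction n as [| n IH].
  - unfold hypcoef. simpl. lra.
  - rewrite hypcoef_succ, S_INR. pose proof (pos_INR n). pose proof (hypcoef_nonneg n).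
    set (m := INR n) in *.
    assert (Hratio : (1 / 2 + m) ^ 2 / ((c + m) * (m + 1)) <= (m + 1) / (m + 3)).
    { apply Rmult_le_reg_r with ((c + m) * (m + 1) * (m + 3)); [nra |].
      field_simplify; [| lra | nra].
      assert ((1 / 2 + m) ^ 2 * (m + 3) <= (m + 1) ^ 2 * (c + m)) by nra. nra. }
    assert (0 <= (1 / 2 + m) ^ 2 / ((c + m) * (m + 1))).
    { apply Rmult_le_pos; [nra | left; apply Rinv_0_lt_compat; nra]. }
    apply Rle_trans with (2 / ((m + 1) * (m + 2)) * ((m + 1) / (m + 3))).
    + apply Rmult_le_compat; assumption.
    + right. field. lra.
Qed.

Lemma hypcoef_le_1 n : hypcoef n <= 1.
Proof.
  eapply Rle_trans; [apply hypcoef_le |]. pose proof (pos_INR n).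
  apply Rmult_le_reg_r with ((INR n + 1) * (INR n + 2)); [nra |].
  field_simplify; nra.
Qed.

Lemma hyp2F1_summable z : Rabs z < 1 -> ex_series (fun n => hypcoef n * z ^ n).
Proof.
  intros Hz.
  apply (@ex_series_le R_AbsRing R_CompleteNormedModule) with (fun n => Rabs z ^ n).
  - intros n. change (Rabs (hypcoef n * z ^ n) <= Rabs z ^ n).
    rewrite Rabs_mult, RPow_abs, (Rabs_pos_eq (hypcoef n)) by apply hypcoef_nonneg.
    pose proof (hypcoef_le_1 n). pose proof (Rabs_pos (z ^ n)). nra.
  - apply ex_series_geom. rewrite Rabs_Rabsolu. exact Hz.
Qed.

Lemma hyp2F1_bounds z : 0 <= z < 1 -> 0 <= hyp2F1 (1 / 2) (1 / 2) c z <= 2.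
Proof.
  intros Hz. rewrite hyp2F1_as_series.
  assert (Hsum : ex_series (fun n => hypcoef n * z ^ n))
    by (apply hyp2F1_summable; rewrite Rabs_pos_eq by lra; lra).
  split.
  - apply Series_ge_of_partial; [exact Hsum |]. intros N. apply sum_n_nonneg.
    intros n. apply Rmult_le_pos; [apply hypcoef_nonneg | apply pow_le; lra].
  - apply Series_le_of_partial; [exact Hsum |]. intros N. eapply Rle_trans.
    + apply (sum_n_m_le _ (fun n => 2 / ((INR n + 1) * (INR n + 2)))).
      intros n. pose proof (hypcoef_le n). pose proof (hypcoef_nonneg n).
      assert (z ^ n <= 1) by (rewrite <- (pow1 n); apply pow_incr; lra).
      pose proof (pow_le z n ltac:(lra)). nra.
    + change (sum_n (fun n => 2 / ((INR n + 1) * (INR n + 2))) N <= 2).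
      rewrite sum_telescoping_bound. pose proof (pos_INR N).
      assert (0 < 2 / (INR N + 2)) by (apply Rdiv_lt_0_compat; lra). lra.
Qed.

(* Termwise Lipschitz bound for the odd function x H(x^2) on [-1/2, 1/2]. *)
Lemma hypcoef_odd_term_le x y n : Rabs x <= 1 / 2 -> Rabs y <= 1 / 2 -> y <= x ->
  x * (hypcoef n * (x ^ 2) ^ n) - y * (hypcoef n * (y ^ 2) ^ n)
  <= (x - y) * ((2 * INR n + 1) * (1 / 4) ^ n).
Proof.
  intros Hx Hy Hxy. rewrite <- !pow_mult.
  replace (x * (hypcoef n * x ^ (2 * n)) - y * (hypcoef n * y ^ (2 * n)))
    with (hypcoef n * (x ^ S (2 * n) - y ^ S (2 * n))) by (simpl; ring).
  pose proof (pow_diff_bound (1 / 2) x y (2 * n) Hx Hy Hxy) as Hdiff.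
  rewrite S_INR, mult_INR, pow_mult in Hdiff.
  replace ((1 / 2) ^ 2) with (1 / 4) in Hdiff by field. simpl (INR 2) in Hdiff.
  pose proof (hypcoef_nonneg n). pose proof (hypcoef_le_1 n).
  pose proof (Rle_abs (x ^ S (2 * n) - y ^ S (2 * n))).
  pose proof (Rabs_pos (x ^ S (2 * n) - y ^ S (2 * n))). nra.
Qed.

(* Summing the termwise bound with sum_n (2n+1) 4^(-n) = 20/9. *)
Lemma hyp2F1_odd_lipschitz x y : Rabs x <= 1 / 2 -> Rabs y <= 1 / 2 -> y <= x ->
  x * hyp2F1 (1 / 2) (1 / 2) c (x ^ 2) - y * hyp2F1 (1 / 2) (1 / 2) c (y ^ 2)
  <= 20 / 9 * (x - y).
Proof.
  intros Hx Hy Hxy.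
  assert (Hsq : forall w, Rabs w <= 1 / 2 -> Rabs (w ^ 2) < 1).
  { intros w Hw. rewrite <- RPow_abs.
    assert (Rabs w ^ 2 <= (1 / 2) ^ 2) by (apply pow_incr; split; [apply Rabs_pos | exact Hw]).
    lra. }
  assert (Ex := ex_series_scal_l x _ (hyp2F1_summable _ (Hsq x Hx))).
  assert (Ey := ex_series_scal_l y _ (hyp2F1_summable _ (Hsq y Hy))).
  rewrite !hyp2F1_as_series, <- !Series_scal_l, <- Series_minus by assumption.
  apply Series_le_of_partial; [apply (ex_series_minus _ _ Ex Ey) |]. intros N.
  eapply Rle_trans.
  - apply (sum_n_m_le _ (fun n => scal (x - y) ((2 * INR n + 1) * (1 / 4) ^ n))).
    intros n. apply hypcoef_odd_term_le; assumption.
  - change (sum_n (fun n => scal (x - y) ((2 * INR n + 1) * (1 / 4) ^ n)) N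
            <= 20 / 9 * (x - y)).
    rewrite sum_n_scal_l, sum_arith_geom. change (scal (x - y) ?v) with ((x - y) * v).
    assert (0 <= (24 * INR N + 44) / 9 * (1 / 4) ^ S N).
    { pose proof (pos_INR N). apply Rmult_le_pos; [apply Rmult_le_pos | apply pow_le]; lra. }
    nra.
Qed.

End HypergeometricCoefficients.

(* The core elementary estimate: with 0 <= C <= t^2 <= 1/4 the cross term is
   absorbed by g + t, near -t by the Lipschitz bound, far from it by fg <= 2. *)
Lemma cross_term_bound C t g fg ft :
  0 <= C <= t ^ 2 -> 0 < t <= 1 / 2 -> - t <= g < 1 -> 0 <= ft <= 2 * t ->
  (1 / 2 <= g -> fg <= 2) -> (g <= 1 / 2 -> fg + ft <= 20 / 9 * (g + t)) ->
  C * (fg * (1 + t) + ft * (1 - g)) <= g + t.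
Proof.
  intros HC Ht Hg Hft Hfar Hnear.
  destruct (Rle_dec g (1 / 2)) as [Hl | Hl].
  - specialize (Hnear Hl).
    assert (Hsum : fg * (1 + t) + ft * (1 - g) <= (1 + t) * (20 / 9) * (g + t)).
    { assert (fg * (1 + t) <= (20 / 9 * (g + t) - ft) * (1 + t))
        by (apply Rmult_le_compat_r; lra).
      assert (0 <= ft * (g + t)) by nra. nra. }
    assert (t ^ 2 * (1 + t) * (20 / 9) <= 1) by nra.
    assert (0 <= (1 + t) * (20 / 9) * (g + t)) by nra.
    assert (C * (fg * (1 + t) + ft * (1 - g)) <= C * ((1 + t) * (20 / 9) * (g + t)))
      by (apply Rmult_le_compat_l; lra).
    nra.
  - specialize (Hfar ltac:(lra)).
    assert (Hsum : fg * (1 + t) + ft * (1 - g) <= 2 + 3 * t).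
    { assert (fg * (1 + t) <= 2 * (1 + t)) by (apply Rmult_le_compat_r; lra).
      assert (ft * (1 - g) <= 2 * t * (1 / 2)) by (apply Rmult_le_compat; lra). lra. }
    assert (C * (fg * (1 + t) + ft * (1 - g)) <= C * (2 + 3 * t))
      by (apply Rmult_le_compat_l; lra).
    assert (t ^ 2 * (2 + 3 * t) <= 1 / 2 + t) by nra. nra.
Qed.

Lemma endpoint_ratio_le C t g fg ft :
  0 <= C <= t ^ 2 -> 0 < t <= 1 / 2 -> - t <= g < 1 -> 0 <= ft <= 2 * t ->
  (1 / 2 <= g -> fg <= 2) -> (g <= 1 / 2 -> fg + ft <= 20 / 9 * (g + t)) ->
  (1 - C * (- ft)) / (1 - - t) <= (1 - C * fg) / (1 - g).
Proof.
  intros HC Ht Hg Hft Hfar Hnear.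
  pose proof (cross_term_bound C t g fg ft HC Ht Hg Hft Hfar Hnear).
  apply Rmult_le_reg_r with ((1 + t) * (1 - g)); [nra |].
  replace ((1 - C * - ft) / (1 - - t) * ((1 + t) * (1 - g))) with ((1 + C * ft) * (1 - g))
    by (field; lra).
  replace ((1 - C * fg) / (1 - g) * ((1 + t) * (1 - g))) with ((1 - C * fg) * (1 + t))
    by (field; lra).
  nra.
Qed.

Definition Fstar_coeff (k : nat) : R :=
  2 / INR k * (Gamma ((INR k + 1) / 2) / Gamma (INR k / 2)) ^ 2.

Lemma Fstar_factor k g :
  Fstar k g = Fstar_coeff k * (g * hyp2F1 (1 / 2) (1 / 2) (INR k / 2 + 1) (g ^ 2)).
Proof. unfold Fstar, Fstar_coeff, Rdiv. ring. Qed.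

(* C_k = (Gamma(s+1/2)/Gamma(s))^2 / s with s = k/2, which lies in [0, 1]. *)
Lemma Fstar_coeff_bounds k : 2 <= INR k -> 0 <= Fstar_coeff k <= 1.
Proof.
  intros Hk. set (s := INR k / 2).
  assert (Hhalf : (INR k + 1) / 2 = s + / 2) by (unfold s; field).
  pose proof (Gamma_half_ratio s ltac:(unfold s; lra)) as Hratio.
  unfold Fstar_coeff. fold s. rewrite Hhalf.
  set (r := Gamma (s + / 2) / Gamma s) in *.
  pose proof (pow2_ge_0 r).
  replace (2 / INR k * r ^ 2) with (r ^ 2 / s) by (unfold s; field; lra).
  split.
  - apply Rmult_le_pos; [lra | left; apply Rinv_0_lt_compat; unfold s; lra].
  - apply Rmult_le_reg_r with s; [unfold s; lra |].
    unfold Rdiv. rewrite Rmult_assoc, Rinv_l by (unfold s; lra). lra.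
Qed.

Lemma q_factor d x : 2 <= INR d ->
  q d x = (1 - Fstar_coeff (d * d - 1) * (/ (INR d - 1)) ^ 2
               * (x * hyp2F1 (1 / 2) (1 / 2) (INR (d * d - 1) / 2 + 1) (x ^ 2))) / (1 - x).
Proof.
  intros Hd. unfold q. rewrite Fstar_factor. do 2 f_equal. field. lra.
Qed.

Theorem mainTheorem5 (d : nat) (hd : (3 <= d)%nat) :
  forall g : R, - / (INR d - 1) <= g < 1 ->
    q d (- / (INR d - 1)) <= q d g.
Proof.
  intros g Hg.
  assert (Hd : 3 <= INR d) by (apply le_INR in hd; simpl in hd; lra).
  assert (Hk : INR (d * d - 1) = INR d * INR d - 1)
    by (rewrite minus_INR, mult_INR by nia; simpl; ring).
  rewrite !q_factor by lra.
  set (t := / (INR d - 1)) in *. set (c := INR (d * d - 1) / 2 + 1).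
  assert (Ht : 0 < t <= 1 / 2).
  { unfold t. split; [apply Rinv_0_lt_compat; lra |].
    apply Rmult_le_reg_r with (INR d - 1); [lra |]. rewrite Rinv_l; lra. }
  assert (Hc : 2 <= c) by (unfold c; nra).
  pose proof (Fstar_coeff_bounds (d * d - 1) ltac:(nra)).
  replace ((- t) ^ 2) with (t ^ 2) by ring.
  replace (- t * hyp2F1 (1 / 2) (1 / 2) c (t ^ 2))
    with (- (t * hyp2F1 (1 / 2) (1 / 2) c (t ^ 2))) by ring.
  pose proof (hyp2F1_bounds c Hc (t ^ 2) ltac:(nra)).
  apply endpoint_ratio_le; [nra | exact Ht | exact Hg | nra | |].
  - intros Hfar. pose proof (hyp2F1_bounds c Hc (g ^ 2) ltac:(nra)). nra.
  - intros Hnear.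
    assert (Hlip := hyp2F1_odd_lipschitz c Hc g (- t)
      ltac:(apply Rabs_le; lra) ltac:(apply Rabs_le; lra) ltac:(lra)).
    replace ((- t) ^ 2) with (t ^ 2) in Hlip by ring. lra.
Qed.
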